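(* If $G$ is a graph without universal vertices, then $\eta(G\lor K_1)=\eta(G)$.
   Context: All graphs are finite, simple and undirected. A vertex $v$ of $G$ is universal if $N(v)=V(G)\setminus\{v\}$, where $N(v)$ is its set of neighbours. $K_1$ is the graph with a single vertex. For disjoint graphs $G_1,G_2$, the join $G_1\lor G_2$ has vertex set $V(G_1)\cup V(G_2)$ and edge set $E(G_1)\cup E(G_2)\cup\{(u,v):u\in V(G_1),v\in V(G_2)\}$. For a positive integer $k$, $[k]=\{1,\dots,k\}$. For a labeling $f:V(G)\to[k]$ and $S\subseteq V(G)$, $f(S)=\sum_{u\in S}f(u)$. A labeling $f:V(G)\to[k]$ is an additive $k$-coloring if $f(N(u))\neq f(N(v))$ for every edge $(u,v)$ of $G$. The additive chromatic number $\eta(G)$ is the least $k$ for which $G$ has an additive $k$-coloring. *)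

From mathcomp Require Import all_boot.
Set Implicit Arguments. Unset Strict Implicit. Unset Printing Implicit Defensive.

(* A finite simple graph: vertex type T : finType, adjacency e : rel T,
   assumed symmetric and irreflexive (hypotheses of the theorem). *)

Definition universal (T : finType) (e : rel T) (v : T) : Prop :=
  forall w : T, w != v -> e v w.

Definition nbsum (T : finType) (e : rel T) (f : T -> nat) (u : T) : nat :=
  \sum_(w : T | e u w) f w.

Definition additive_coloring (T : finType) (e : rel T) (k : nat) (f : T -> nat) : Prop :=
  (forall v, 1 <= f v <= k) /\
  (forall u v, e u v -> nbsum e f u != nbsum e f v).

Definition has_additive_coloring (T : finType) (e : rel T) (k : nat) : Prop :=
  exists f : T -> nat, additive_coloring e k f.

Definition is_additive_chromatic_number (T : finType) (e : rel T) (k : nat) : Prop :=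
  0 < k /\ has_additive_coloring e k /\
  (forall j, 0 < j < k -> ~ has_additive_coloring e j).

(* The join G \/ K_1: vertex set option T, None is the new vertex,
   adjacent to every vertex of G; edges of G are kept. *)
Definition join_K1 (T : finType) (e : rel T) : rel (option T) :=
  fun x y => match x, y with
             | Some a, Some b => e a b
             | None, None => false
             | _, _ => true
             end.

From mathcomp Require Import all_boot.

(* Labelling the apex of G \/ K_1 with 1 shifts every neighbourhood sum of G by
   1, so an additive k-colouring of G extends to G \/ K_1 as long as the apex
   sum, which is the total weight of G, differs from 1 + f(N(u)) for each u.
   This is where non-universality enters: some v != u lies outside N(u), and
   both u and v carry label >= 1, so f(N(u)) + 2 <= f(V(G)).  Conversely,
   restricting a colouring of G \/ K_1 to G cancels the common summand
   contributed by the apex. *)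

Lemma big_option (T : finType) (P : pred (option T)) (F : option T -> nat) :
  \sum_(x | P x) F x =
    (if P None then F None else 0) + \sum_(a | P (Some a)) F (Some a).
Proof.
rewrite (bigID (fun x => x == None)) /=; congr (_ + _).
  case: ifP => PN.
    by rewrite (big_pred1 None) // => -[a|] /=; rewrite ?andbF ?PN.
  by rewrite big1 // => x /andP[Px /eqP ex]; rewrite ex PN in Px.
rewrite (reindex_omap Some id); last by move=> [a|] //= /andP[].
by apply: eq_bigl => a /=; rewrite eqxx !andbT.
Qed.

Section JoinK1.

Variables (T : finType) (e : rel T).

Lemma nbsum_join_K1_Some (g : option T -> nat) (u : T) :
  nbsum (join_K1 e) g (Some u) = g None + nbsum e (g \o Some) u.
Proof. by rewrite /nbsum big_option. Qed.

Lemma nbsum_join_K1_None (g : option T -> nat) :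
  nbsum (join_K1 e) g None = \sum_(a : T) g (Some a).
Proof. by rewrite /nbsum big_option. Qed.

Lemma additive_coloring_join_K1_restrict (k : nat) (g : option T -> nat) :
  additive_coloring (join_K1 e) k g -> additive_coloring e k (g \o Some).
Proof.
move=> [g_range g_add]; split=> [v | u v euv]; first exact: g_range.
by have := g_add (Some u) (Some v) euv; rewrite !nbsum_join_K1_Some eqn_add2l.
Qed.

Lemma nbsum_nonuniversal_lt (f : T -> nat) (u : T) :
  irreflexive e -> ~ universal e u -> (forall v, 0 < f v) ->
  nbsum e f u + 2 <= \sum_(a : T) f a.
Proof.
move=> e_irr u_nonuniv f_pos.
have [v v_u not_euv] : exists2 v, v != u & ~~ e u v.
  apply/exists_inP; apply: contra_notT u_nonuniv => /exists_inPn no_v w w_u.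
  by have := no_v w w_u; rewrite negbK.
rewrite (bigID (e u)) /= leq_add2l (bigD1 u) /= ?e_irr //.
rewrite (bigD1 v) /= ?not_euv ?v_u // addnA.
by apply: leq_trans (leq_addr _ _); rewrite -addn1 leq_add ?f_pos.
Qed.

Lemma additive_coloring_join_K1_extend (k : nat) (f : T -> nat) :
  irreflexive e -> (forall v, ~ universal e v) -> 0 < k ->
  additive_coloring e k f -> additive_coloring (join_K1 e) k (oapp f 1).
Proof.
move=> e_irr no_univ k_gt0 f_col; have [f_range f_add] := f_col.
have f_pos v : 0 < f v by case/andP: (f_range v).
have apex_sum u : nbsum (join_K1 e) (oapp f 1) (Some u)
                    != nbsum (join_K1 e) (oapp f 1) None.
  rewrite nbsum_join_K1_Some nbsum_join_K1_None /= neq_ltn; apply/orP; left.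
  by rewrite add1n -addn2; apply: nbsum_nonuniversal_lt.
(* [//] closes the case (Some u, None) with [apex_sum]. *)
split=> [[a|] | [u|] [v|] //= euv]; rewrite /= ?k_gt0 ?f_range //.
  by rewrite !nbsum_join_K1_Some eqn_add2l; apply: f_add.
by rewrite eq_sym apex_sum.
Qed.

Lemma has_additive_coloring_join_K1 (k : nat) :
  irreflexive e -> (forall v, ~ universal e v) -> 0 < k ->
  has_additive_coloring (join_K1 e) k <-> has_additive_coloring e k.
Proof.
move=> e_irr no_univ k_gt0; split=> [[g g_col] | [f f_col]].
  by exists (g \o Some); apply: additive_coloring_join_K1_restrict.
by exists (oapp f 1); apply: additive_coloring_join_K1_extend.
Qed.

End JoinK1.

Lemma is_additive_chromatic_number_transfer
    (T T' : finType) (e : rel T) (e' : rel T') :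
  (forall j, 0 < j -> has_additive_coloring e j <-> has_additive_coloring e' j) ->
  forall k, is_additive_chromatic_number e k -> is_additive_chromatic_number e' k.
Proof.
move=> same_colorings k [k_gt0 [has_k k_min]]; split=> //; split.
  by apply/same_colorings.
move=> j /andP[j_gt0 j_lt_k] has_j; apply: (k_min j); first by rewrite j_gt0.
exact/same_colorings.
Qed.

Theorem mainTheorem5 (T : finType) (e : rel T)
  (e_sym : symmetric e) (e_irr : irreflexive e)
  (no_univ : forall v : T, ~ universal e v) :
  forall k : nat,
    is_additive_chromatic_number (join_K1 e) k <-> is_additive_chromatic_number e k.
Proof.
have same_colorings j : 0 < j ->
    has_additive_coloring (join_K1 e) j <-> has_additive_coloring e j.
  exact: has_additive_coloring_join_K1.
move=> k; split; apply: is_additive_chromatic_number_transfer => j /same_colorings //.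
exact: iff_sym.
Qed.
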